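(* Fix $1\le r<\infty$, $d\in\mathbb{N}$ and $\varepsilon>0$. Let $a=\lceil(32/\varepsilon+2)^r\rceil$, $k_j=a^{j-1}$, and $Q=\{k_{2j}\}_{j=1}^\infty$. Then for all $\bar m\in[Q]^d$, all $k\in Q$ with $k>m_d$, and all step preserving maps $F\colon S^+_{\ell_\infty^k}\to S^+_{\ell_r^k}$ with $\omega_F(\tfrac1d)\le\tfrac\varepsilon8$, we have \[\Big\|F(z(\bar m))-\frac1{k^{1/r}}\sum_{i=1}^ke_i\Big\|_r\le\varepsilon,\] where $(e_i)_{i=1}^k$ is the standard basis of $\mathbb{R}^k$.
   Context: $S^+_{\ell_p^k}=\{x\in\mathbb{R}^k:\|x\|_p=1,\ x_i\ge0\ \forall i\}$. $[Q]^d$ is the set of increasing $d$-tuples from $Q$; with $m_0=0$, $z(\bar m)=\sum_{s=1}^d(1-\frac{s-1}{d})1_{(m_{s-1},m_s]}$, where $1_{(a,b]}$ is the indicator vector of $\{i:a<i\le b\}$. $F=(F_i)$ is step preserving if $x_i=x_j$ implies $F_i(x)=F_j(x)$. $\omega_F(t)=\sup\{\|F(x)-F(y)\|_r:\|x-y\|_\infty\le t\}$. *)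

From HB Require Import structures.
From mathcomp Require Import all_boot all_order all_algebra.
From mathcomp Require Import all_classical all_reals all_analysis.
Set Implicit Arguments. Unset Strict Implicit. Unset Printing Implicit Defensive.
Import Order.TTheory GRing.Theory Num.Theory.
Local Open Scope ring_scope.
Local Open Scope classical_set_scope.

Section Defs.
Variable R : realType.

Definition lpnorm (p : R) (k : nat) (x : 'I_k -> R) : R :=
  (\sum_(i < k) `|x i| `^ p) `^ p^-1.

Definition linfnorm (k : nat) (x : 'I_k -> R) : R :=
  \big[Num.max/0]_(i < k) `|x i|.

Definition Splus_lp (p : R) (k : nat) : set ('I_k -> R) :=
  [set x | lpnorm p x = 1 /\ forall i, 0 <= x i].
Definition Splus_linf (k : nat) : set ('I_k -> R) :=
  [set x | linfnorm x = 1 /\ forall i, 0 <= x i].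

Definition step_preserving (k : nat) (D : set ('I_k -> R))
  (F : ('I_k -> R) -> ('I_k -> R)) : Prop :=
  forall x, D x -> forall i j, x i = x j -> F x i = F x j.

Definition omegaF (r : R) (k : nat) (F : ('I_k -> R) -> ('I_k -> R)) (t : R)
  : \bar R :=
  ereal_sup [set e | exists x y, @Splus_linf k x /\ @Splus_linf k y /\
              linfnorm (fun i => x i - y i) <= t /\
              e = (lpnorm r (fun i => F x i - F y i))%:E].

(* the vector z(m) in R^k, m = (m_1,...,m_d), m_0 = 0; coordinate i : 'I_k
   is the (i+1)-th coordinate; s : 'I_d is the (s+1)-th summand *)
Definition zvec (k d : nat) (m : seq nat) : 'I_k -> R :=
  fun i => \sum_(s < d)
     (1 - (s%:R / d%:R)) * ((nth 0%N (0%N :: m) s < i.+1 <= nth 0%N m s)%N)%:R.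
End Defs.

Definition kseq (a j : nat) : nat := (a ^ (j - 1))%N.
Definition Qset (a : nat) : nat -> Prop :=
  fun n => exists j, (1 <= j)%N /\ n = kseq a (2 * j).

From HB Require Import structures.
From mathcomp Require Import all_boot all_order all_algebra.
From mathcomp Require Import all_classical all_reals all_analysis.
From mathcomp.algebra_tactics Require Import ring lra.
From mathcomp Require Import zify.
Import Order.TTheory GRing.Theory Num.Theory.
Set Implicit Arguments.
Unset Strict Implicit.
Unset Printing Implicit Defensive.

(* Write m_0 = 0 and m_(d+1) = k.  The vector z(m) is constant, equal to
   1 - s/d, on each block [m_s, m_(s+1)) of coordinates, s <= d.  Consecutive
   elements of Q differ by a factor >= a^2, so every block is at least a times
   longer than everything before it.  Merging the blocks into pairs {s, s+1}
   with s of a fixed parity gives a step vector v at sup-distance 1/d from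
   z(m); F(v) is constant on each pair, so at most a fraction 1/a of its
   l_r^r-mass lies on the first blocks of the pairs, and F(z(m)) has norm at
   most eps/8 + a^(-1/r) there.  The two parities cover every block but the
   last one, on which z(m) vanishes, so that F(z(m)) is constant there.  The
   normalised constant vector is also constant on the last block and has norm
   at most a^(-1/r) off it, and two unit vectors that are constant on a common
   set and small off it are close. *)

Lemma card_ord_itv k lo hi : hi <= k -> #|[pred i : 'I_k | lo <= i < hi]| = hi - lo.
Proof.
move=> hi_k; rewrite -sum1_card (eq_bigl (fun i : 'I_k => (lo <= i) && (i < hi))) //.
rewrite -(big_mkord (fun i => (lo <= i) && (i < hi)) (fun=> 1)) -big_nat_widen //.
by rewrite -(big_nat_widenl _ _ _ (fun=> true)) ?sum_nat_const_nat ?muln1.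
Qed.

Lemma Qset_gap a x y : 1 < a -> Qset a x -> Qset a y -> x < y -> a * a * x <= y.
Proof.
move=> a_gt1 [j [j_gt0 ->]] [j' [j'_gt0 ->]]; rewrite /kseq ltn_exp2l // => lt_jj'.
by rewrite -mulnA -!expnS leq_exp2l //; lia.
Qed.

Section Blocks.
Variables (k : nat) (m : seq nat).
Hypothesis mk_sorted : sorted ltn (rcons m k).

(* Coordinate i < k lies in the block [bnd s, bnd s.+1) with s = blk i <= size m;
   bnd 0 = 0 and bnd s = k for s > size m. *)
Definition bnd s := nth k (0 :: m) s.
Definition blk i := find (fun t => i < t) m.

Lemma bndE s : bnd s = nth k (0 :: rcons m k) s.
Proof. by case: s => //= s; rewrite nth_rcons_default. Qed.

Let sorted_bnd : sorted leq (0 :: rcons m k).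
Proof. by case: (rcons m k) (sub_sorted ltnW mk_sorted) => //= t l ->. Qed.

Lemma bnd_le_k s : bnd s <= k.
Proof.
rewrite bndE; have [s_lt|s_ge] := ltnP s (size m).+2; last first.
  by rewrite nth_default //= size_rcons.
have := sorted_leq_nth leq_trans leqnn k sorted_bnd s (size m).+1.
rewrite !inE /= size_rcons => /(_ s_lt (ltnSn _) s_lt).
by rewrite nth_rcons ltnn eqxx.
Qed.

Lemma bnd_homo : {homo bnd : s t / s <= t}.
Proof.
move=> s t le_st; have [t_lt|t_ge] := ltnP t (size m).+1; last first.
  by rewrite [bnd t]nth_default ?bnd_le_k.
by rewrite !bndE; apply: (sorted_leq_nth leq_trans leqnn k sorted_bnd); rewrite ?inE /= ?size_rcons; lia.
Qed.

Lemma bnd_ltS s : 0 < s <= size m -> bnd s < bnd s.+1.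
Proof.
case: s => // s /= s_lt; rewrite /bnd /= -!(nth_rcons_default k m).
by apply: (sorted_ltn_nth ltn_trans k mk_sorted); rewrite ?inE /= ?size_rcons; lia.
Qed.

Lemma bnd_in_rcons s : 0 < s <= (size m).+1 -> bnd s \in rcons m k.
Proof. by case: s => // s /= s_lt; rewrite /bnd /= -nth_rcons_default mem_nth ?size_rcons. Qed.

Lemma blk_le i : blk i <= size m.
Proof. exact: find_size. Qed.

Lemma bnd_blk i : i < k -> bnd (blk i) <= i < bnd (blk i).+1.
Proof.
move=> i_lt; apply/andP; split.
  case def_s: (blk i) => [|s] //; rewrite /bnd /= leqNgt.
  by apply/negbT/(before_find k); rewrite -[find _ _]/(blk i) def_s.
rewrite /bnd /=; have [has_i|hasN_i] := boolP (has (fun t => i < t) m).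
  exact: nth_find.
by rewrite /blk (hasNfind hasN_i) nth_default.
Qed.

Lemma ltn_blk i s : i < k -> (blk i < s) = (i < bnd s).
Proof.
move=> /bnd_blk /andP[lo hi]; apply/idP/idP => [lt_s|].
  exact: leq_trans hi (bnd_homo lt_s).
by apply: contraTT; rewrite -!leqNgt => /bnd_homo /leq_trans; apply.
Qed.

Lemma blkE i s : i < k -> (blk i == s) = (bnd s <= i < bnd s.+1).
Proof.
move=> i_lt; rewrite eqn_leq -[blk i <= s]ltnS ltn_blk // [s <= _]leqNgt ltn_blk //.
by rewrite -leqNgt andbC.
Qed.

Lemma card_blk s : #|[pred i : 'I_k | blk i == s]| = bnd s.+1 - bnd s.
Proof.
rewrite -(card_ord_itv (bnd s) (bnd_le_k s.+1)); apply: eq_card => i.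
by rewrite !inE blkE.
Qed.

Lemma card_blk_lt s : #|[pred i : 'I_k | blk i < s]| = bnd s.
Proof.
rewrite -[bnd s]subn0 -(card_ord_itv 0 (bnd_le_k s)); apply: eq_card => i.
by rewrite !inE ltn_blk.
Qed.

Section Sparse.
Variable a : nat.
Hypotheses (a_gt1 : 1 < a) (mkQ : {in rcons m k, forall t, Qset a t}).

Lemma bnd_gap s : 0 < s <= size m -> a * a * bnd s <= bnd s.+1.
Proof.
move=> s_in; apply: Qset_gap => //; last exact: bnd_ltS.
  by apply/mkQ/bnd_in_rcons; lia.
by apply/mkQ/bnd_in_rcons; lia.
Qed.

Lemma card_blk_sparse s : s < size m ->
  a * #|[pred i : 'I_k | blk i == s]| <= #|[pred i : 'I_k | blk i == s.+1]|.
Proof.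
move=> s_lt; rewrite !card_blk; have := bnd_gap (s := s.+1) s_lt.
have : a.+1 * bnd s.+1 <= a * a * bnd s.+1 by rewrite leq_mul2r; apply/orP; right; nia.
lia.
Qed.

Lemma card_blk_head : 0 < size m -> a * #|[pred i : 'I_k | blk i < size m]| <= k.
Proof.
move=> m_gt0; rewrite card_blk_lt.
have /bnd_gap : 0 < size m <= size m by rewrite m_gt0 leqnn.
by rewrite [bnd (size m).+1]nth_default //; nia.
Qed.

End Sparse.

End Blocks.

(* [pair_floor p] merges the blocks s and s.+1 when odd s = p. *)
Definition pair_floor (p : bool) (s : nat) : nat := s - (odd s != p).

Lemma pair_floor_bounds p s : pair_floor p s <= s <= (pair_floor p s).+1.
Proof. by rewrite /pair_floor; case: (_ != _); lia. Qed.

Lemma pair_floor0 p : pair_floor p 0 = 0.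
Proof. by case: p. Qed.

Lemma pair_floorS p s : odd s = p -> pair_floor p s.+1 = pair_floor p s.
Proof. by rewrite /pair_floor /= => <-; case: (odd s); rewrite /= ?subn1 ?subn0. Qed.

Local Open Scope ring_scope.

Lemma powRVK (R : realType) (p c : R) : p != 0 -> 0 <= c -> (c `^ p) `^ p^-1 = c.
Proof. by move=> p0 c0; rewrite -powRrM mulfV // powRr1. Qed.

Lemma powRKV (R : realType) (p c : R) : p != 0 -> 0 <= c -> (c `^ p^-1) `^ p = c.
Proof. by move=> p0 c0; rewrite -powRrM mulVf // powRr1. Qed.

Lemma powR_invr (R : realType) (x q : R) : 0 <= x -> x^-1 `^ q = (x `^ q)^-1.
Proof. by move=> x0; rewrite -powR_inv1 // -powRrM mulN1r powRN. Qed.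

Section LpNorm.
Variables (R : realType) (p : R).
Hypothesis p_ge1 : 1 <= p.
Variable k : nat.
Implicit Types (x y : 'I_k -> R) (c : R).

Let p_gt0 : 0 < p. Proof. exact: lt_le_trans ltr01 p_ge1. Qed.
Let p_neq0 : p != 0. Proof. exact: lt0r_neq0 p_gt0. Qed.

Lemma lpnorm_ge0 x : 0 <= lpnorm p x.
Proof. exact: powR_ge0. Qed.

Let sum_powR_ge0 x : 0 <= \sum_(i < k) `|x i| `^ p.
Proof. by apply: sumr_ge0 => i _; exact: powR_ge0. Qed.

Lemma lpnorm_powR x : lpnorm p x `^ p = \sum_(i < k) `|x i| `^ p.
Proof. exact: powRKV p_neq0 (sum_powR_ge0 x). Qed.

Lemma lpnorm_le_powR x c : 0 <= c -> \sum_(i < k) `|x i| `^ p <= c `^ p ->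
  lpnorm p x <= c.
Proof.
move=> c0 le_xc; rewrite -(powRVK p_neq0 c0) /lpnorm.
by apply: ge0_ler_powR; rewrite // ?nnegrE ?sum_powR_ge0 ?powR_ge0 // invr_ge0 ltW.
Qed.

Lemma lpnorm_le x y : (forall i, `|x i| <= `|y i|) -> lpnorm p x <= lpnorm p y.
Proof.
move=> le_xy; apply: lpnorm_le_powR; first exact: lpnorm_ge0.
rewrite lpnorm_powR; apply: ler_sum => i _.
by apply: ge0_ler_powR; rewrite // ?nnegrE // ltW.
Qed.

Lemma lpnormZ c x : lpnorm p (fun i => c * x i) = `|c| * lpnorm p x.
Proof.
rewrite /lpnorm; under eq_bigr do rewrite normrM powRM //.
by rewrite -mulr_sumr powRM ?powR_ge0 // powRVK.
Qed.

Lemma lpnorm_eq0 x : lpnorm p x = 0 -> x = 0.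
Proof.
move=> x0; apply/funext => i.
have : \sum_(i < k) `|x i| `^ p = 0 by rewrite -lpnorm_powR x0 powR0.
move/psumr_eq0P => /(_ (fun i _ => powR_ge0 _ _) i isT) /eqP.
by rewrite powR_eq0 normr_eq0 => /andP[/eqP].
Qed.

Lemma sum_normalized_powR x : 0 < lpnorm p x ->
  \sum_(i < k) (`|x i| / lpnorm p x) `^ p = 1.
Proof.
move=> x_gt0; have := lpnormZ (lpnorm p x)^-1 x.
rewrite gtr0_norm ?invr_gt0 // mulVf ?gt_eqF // => /(congr1 (fun t => t `^ p)).
rewrite lpnorm_powR powR1 => <-.
by apply: eq_bigr => i _; rewrite normrM gtr0_norm ?invr_gt0 // mulrC.
Qed.

(* Minkowski's inequality, from the convexity of [t |-> t `^ p] applied to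
   [|x i| / |x|_p] and [|y i| / |y|_p] with weights [|x|_p / (|x|_p + |y|_p)]. *)
Lemma lpnormD x y : lpnorm p (fun i => x i + y i) <= lpnorm p x + lpnorm p y.
Proof.
have [x0|x_neq0] := eqVneq (lpnorm p x) 0.
  by rewrite x0 (lpnorm_eq0 x0) add0r; apply: lpnorm_le => i; rewrite add0r.
have [y0|y_neq0] := eqVneq (lpnorm p y) 0.
  by rewrite y0 (lpnorm_eq0 y0) addr0; apply: lpnorm_le => i; rewrite addr0.
have A_gt0 : 0 < lpnorm p x by rewrite lt0r x_neq0 lpnorm_ge0.
have B_gt0 : 0 < lpnorm p y by rewrite lt0r y_neq0 lpnorm_ge0.
have Sx := sum_normalized_powR A_gt0; have Sy := sum_normalized_powR B_gt0.
move: (lpnorm p x) (lpnorm p y) A_gt0 B_gt0 Sx Sy => A B A_gt0 B_gt0 Sx Sy.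
set l := A / (A + B).
have l0 : 0 <= l by rewrite divr_ge0 // ltW // addr_gt0.
have l1 : l <= 1 by rewrite ler_pdivrMr ?addr_gt0 // mul1r lerDl ltW.
have AB0 : 0 <= A + B by rewrite addr_ge0 // ltW.
apply: lpnorm_le_powR => //.
apply: (@le_trans _ _ (\sum_(i < k) (A + B) `^ p *
    (l * (`|x i| / A) `^ p + (1 - l) * (`|y i| / B) `^ p))); last first.
  by rewrite -mulr_sumr big_split -!mulr_sumr /= Sx Sy !mulr1 subrKC mulr1.
apply: ler_sum => i _; apply: (@le_trans _ _ ((`|x i| + `|y i|) `^ p)).
  by apply: ge0_ler_powR; rewrite ?nnegrE ?addr_ge0 ?ler_normD // ltW.
have -> : `|x i| + `|y i| = (A + B) * (l * (`|x i| / A) + (1 - l) * (`|y i| / B)).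
  by rewrite /l; field; rewrite !gt_eqF ?addr_gt0.
have xA : 0 <= `|x i| / A by rewrite divr_ge0 // ltW.
have yB : 0 <= `|y i| / B by rewrite divr_ge0 // ltW.
have conv0 : 0 <= l * (`|x i| / A) + (1 - l) * (`|y i| / B).
  by rewrite addr_ge0 // mulr_ge0 // subr_ge0.
rewrite powRM // ler_wpM2l ?powR_ge0 //.
have := @convex_powR R p p_ge1 (Itv01 l0 l1) (`|x i| / A) (`|y i| / B).
by rewrite !inE /= !in_itv /= !andbT => /(_ xA yB); rewrite !convRE.
Qed.

Lemma lpnormB x y : lpnorm p (fun i => x i - y i) <= lpnorm p x + lpnorm p y.
Proof.
apply: le_trans (lpnormD x (fun i => - y i)) _.
by rewrite lerD2l; apply: lpnorm_le => i; rewrite normrN.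
Qed.

Definition restr (P : pred 'I_k) x : 'I_k -> R := fun i => if P i then x i else 0.

Lemma lpnorm_restr_le P x : lpnorm p (restr P x) <= lpnorm p x.
Proof. by apply: lpnorm_le => i; rewrite /restr; case: (P i); rewrite ?normr0. Qed.

Lemma lpnorm_restr_le_powR P x c : 0 <= c ->
  \sum_(i < k | P i) `|x i| `^ p <= c `^ p -> lpnorm p (restr P x) <= c.
Proof.
move=> c0 le_xc; apply: lpnorm_le_powR => //; apply: le_trans le_xc.
rewrite [leRHS]big_mkcond; apply: ler_sum => i _.
by rewrite /restr; case: (P i); rewrite // normr0 powR0.
Qed.

Lemma lpnorm_restr_cover (P Q1 Q2 : pred 'I_k) x :
  (forall i, P i -> Q1 i || Q2 i) ->
  lpnorm p (restr P x) <= lpnorm p (restr Q1 x) + lpnorm p (restr Q2 x).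
Proof.
move=> PQ; apply: le_trans (lpnormD _ _); apply: lpnorm_le => i; rewrite /restr.
case: (boolP (P i)) => [/PQ|_]; last by rewrite normr0.
by case: (Q1 i) (Q2 i) => [] [] // _; rewrite ?addr0 ?add0r // -mulr2n normrMn mulr2n lerDl.
Qed.

(* Off [P], x and y are c and c' times the same indicator vector, of norm N,
   and 1 - |restr P x|_p <= c N <= 1, 1 - |restr P y|_p <= c' N <= 1. *)
Lemma lpnorm_sub_le_restr (P : pred 'I_k) x y c c' :
  lpnorm p x = 1 -> lpnorm p y = 1 -> 0 <= c -> 0 <= c' ->
  (forall i, ~~ P i -> x i = c) -> (forall i, ~~ P i -> y i = c') ->
  lpnorm p (fun i => x i - y i) <= 2 * (lpnorm p (restr P x) + lpnorm p (restr P y)).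
Proof.
move=> x1 y1 c0 c'0 x_off y_off.
set N := lpnorm p (restr (predC P) (fun=> 1)).
have N0 : 0 <= N := lpnorm_ge0 _.
have restr_cst z b : (forall i, ~~ P i -> z i = b) -> lpnorm p (restr (predC P) z) = `|b| * N.
  move=> z_off; rewrite /N -lpnormZ; congr lpnorm; apply/funext => i; rewrite /restr.
  by case: (boolP (predC P i)) => [/z_off ->|_]; rewrite ?mulr1 ?mulr0.
have split z : lpnorm p z <= lpnorm p (restr P z) + lpnorm p (restr (predC P) z).
  by apply: (lpnorm_restr_cover (P := predT)) => i _; rewrite /= orbN.
have restrB : lpnorm p (restr P (fun i => x i - y i)) <=
    lpnorm p (restr P x) + lpnorm p (restr P y).
  apply: le_trans (lpnormB _ _); apply: lpnorm_le => i; rewrite /restr.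
  by case: (P i); rewrite ?subr0.
have xN : c * N <= 1.
  by rewrite -x1 -(ger0_norm c0) -(restr_cst _ _ x_off); exact: lpnorm_restr_le.
have yN : c' * N <= 1.
  by rewrite -y1 -(ger0_norm c'0) -(restr_cst _ _ y_off); exact: lpnorm_restr_le.
have xH : 1 <= lpnorm p (restr P x) + c * N.
  by rewrite -{1}x1 -(ger0_norm c0) -(restr_cst _ _ x_off); exact: split.
have yH : 1 <= lpnorm p (restr P y) + c' * N.
  by rewrite -{1}y1 -(ger0_norm c'0) -(restr_cst _ _ y_off); exact: split.
apply: le_trans (split _) _.
rewrite (restr_cst _ (c - c')) => [|i Pi]; last by rewrite x_off ?y_off.
rewrite -{1}(ger0_norm N0) -normrM mulrBl.
move: (c * N) (c' * N) xN yN xH yH => cN c'N xN yN xH yH.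
move: restrB xH yH; move: (lpnorm p (restr _ x)) (lpnorm p (restr _ y)) => Hx Hy.
move: (lpnorm p _) => Hxy restrB xH yH; clear -restrB xN yN xH yH.
have : `|cN - c'N| <= Hx + Hy by rewrite ler_norml; apply/andP; split; lra.
lra.
Qed.

End LpNorm.
Section SparseBlocks.
Variables (R : realFieldType) (I : finType) (b : I -> nat) (f : I -> R) (delta : R).
Hypotheses (f_ge0 : forall i, 0 <= f i) (delta_ge0 : 0 <= delta).

Lemma sum_block_le s :
  (forall i j, b i = s -> b j = s.+1 -> f i = f j) ->
  #|[pred i | b i == s]|%:R <= delta * #|[pred i | b i == s.+1]|%:R ->
  \sum_(i | b i == s) f i <= delta * \sum_(i | b i == s.+1) f i.
Proof.
move=> f_pair card_le.
set n0 := #|_| in card_le; set n1 := #|_| in card_le.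
have cross : (\sum_(i | b i == s) f i) * n1%:R = n0%:R * \sum_(j | b j == s.+1) f j.
  transitivity (\sum_(i | b i == s) \sum_(j | b j == s.+1) f i).
    by rewrite mulr_suml; apply: eq_bigr => i _; rewrite sumr_const mulr_natr.
  transitivity (\sum_(i | b i == s) \sum_(j | b j == s.+1) f j).
    by apply: eq_bigr => i /eqP bi; apply: eq_bigr => j /eqP bj; exact: f_pair.
  by rewrite sumr_const mulr_natl.
have [n1_0|n1_gt0] := posnP n1.
  move: card_le; rewrite n1_0 mulr0 lern0 => /eqP/card0_eq cur_empty.
  by rewrite big_pred0 ?mulr_ge0 ?sumr_ge0 // => i; have := cur_empty i; rewrite inE.
rewrite -(ler_pM2r (_ : 0 < n1%:R)) ?ltr0n // cross mulrAC.
by rewrite ler_wpM2r ?sumr_ge0.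
Qed.

Lemma sum_sparse_blocks (E : pred nat) N :
  (forall i, b i <= N)%N ->
  (forall s, E s -> forall i j, b i = s -> b j = s.+1 -> f i = f j) ->
  (forall s, E s -> #|[pred i | b i == s]|%:R <= delta * #|[pred i | b i == s.+1]|%:R) ->
  \sum_(i | E (b i)) f i <= delta * \sum_i f i.
Proof.
move=> b_le f_pair card_le.
pose G s := \sum_(i | b i == s) f i.
have G_ge0 s : 0 <= G s by exact: sumr_ge0.
have by_value (P : pred nat) n : (N <= n)%N ->
    \sum_(i | P (b i)) f i = \sum_(s < n.+1 | P s) G s.
  move=> Nn; rewrite (partition_big (fun i => inord (b i) : 'I_n.+1) (fun s => P s)).
    apply: eq_bigr => s Ps; apply: eq_bigl => i; rewrite -val_eqE /= inordK; last first.
      exact: leq_trans (b_le i) Nn.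
    by case: eqP => [->|]; rewrite ?Ps ?andbF.
  by move=> i Pi; rewrite inordK //; exact: leq_trans (b_le i) Nn.
rewrite (by_value E N) // (by_value predT N.+1) // big_ord_recl /=.
apply: le_trans (_ : \sum_(s < N.+1 | E s) delta * G s.+1 <= _).
  by apply: ler_sum => s Es; exact: sum_block_le (f_pair s Es) (card_le s Es).
rewrite -mulr_sumr ler_wpM2l // big_mkcond /= ler_wpDl //.
by apply: ler_sum => s _; case: (E s).
Qed.

End SparseBlocks.
Section StepVectors.
Variables (R : realType) (k d : nat).
Hypothesis d_gt0 : (0 < d)%N.

Definition stepvec (n : 'I_k -> nat) : 'I_k -> R := fun i => 1 - (n i)%:R / d%:R.

Lemma stepvec_Splus n i0 : (forall i, n i <= d)%N -> n i0 = 0%N ->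
  Splus_linf (stepvec n).
Proof.
move=> n_le n_i0.
have d_pos : 0 < (d%:R : R) by rewrite ltr0n.
have ge0 i : 0 <= stepvec n i by rewrite subr_ge0 ler_pdivrMr // mul1r ler_nat.
split=> //; apply/le_anti/andP; split.
  by apply: bigmax_le => // i _; rewrite ger0_norm // lerBlDr lerDl divr_ge0.
by apply: le_trans (le_bigmax _ _ i0); rewrite /stepvec n_i0 mul0r subr0 normr1.
Qed.

Lemma linfnorm_stepvecB n n' : (forall i, n' i <= n i <= (n' i).+1)%N ->
  linfnorm (fun i => stepvec n i - stepvec n' i) <= d%:R^-1.
Proof.
move=> nn'; apply: bigmax_le => [|i _]; first by rewrite invr_ge0.
have /andP[lo hi] := nn' i.
have -> : stepvec n i - stepvec n' i = - (((n i - n' i)%:R : R) / d%:R).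
  by rewrite natrB // /stepvec; ring.
rewrite normrN normrM !ger0_norm ?invr_ge0 // -[leRHS]mul1r ler_wpM2r ?invr_ge0 //.
by rewrite lern1 leq_subLR addn1.
Qed.

End StepVectors.

Section ZvecImage.
Variables (R : realType) (r : R).
Hypothesis r_ge1 : 1 <= r.
Variables (k d a : nat) (m : seq nat).
Hypotheses (d_gt0 : (0 < d)%N) (size_m : size m = d) (mk_sorted : sorted ltn (rcons m k)).
Hypotheses (a_gt1 : (1 < a)%N) (mkQ : {in rcons m k, forall t, Qset a t}).
Variables (F : ('I_k -> R) -> 'I_k -> R) (eta : R).
Hypotheses (F_Splus : forall x, Splus_linf x -> Splus_lp r (F x))
  (F_step : step_preserving (@Splus_linf R k) F).
Hypothesis F_cont : forall x y, Splus_linf x -> Splus_linf y ->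
  linfnorm (fun i => x i - y i) <= d%:R^-1 -> lpnorm r (fun i => F x i - F y i) <= eta.

Let z := @zvec R k d m.
Let rho := (a%:R : R)^-1 `^ r^-1.
Let kappa := ((k%:R : R) `^ r^-1)^-1.

Let r_neq0 : r != 0. Proof. exact: lt0r_neq0 (lt_le_trans ltr01 r_ge1). Qed.
Let a_pos : 0 < (a%:R : R). Proof. by rewrite ltr0n ltnW. Qed.

Let bnd1_gt0 : (0 < bnd k m 1)%N.
Proof.
have /mkQ [j [_ ->]] : bnd k m 1 \in rcons m k by apply: bnd_in_rcons.
by rewrite expn_gt0 ltnW.
Qed.

Let i0 : 'I_k := Ordinal (leq_trans bnd1_gt0 (bnd_le_k mk_sorted 1)).

Let blk_i0 : blk m i0 = 0%N.
Proof. by apply/eqP; rewrite -leqn0 -ltnS (ltn_blk mk_sorted). Qed.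

Let blk_le_d i : (blk m i <= d)%N.
Proof. by rewrite -size_m blk_le. Qed.

Lemma zvec_blk : z = @stepvec R k d (fun i => blk m i).
Proof.
apply/funext => i; rewrite /z /zvec /stepvec.
have ind_blk s : (s < d)%N ->
    (nth 0%N (0%N :: m) s < i.+1 <= nth 0%N m s)%N = (blk m i == s).
  move=> s_lt; rewrite (blkE mk_sorted) // ltnS.
  by rewrite /bnd !(set_nth_default k) //= size_m // ltnW.
under eq_bigr => s _ do rewrite ind_blk //.
have [lt_d|ge_d] := ltnP (blk m i) d.
  rewrite (bigD1 (Ordinal lt_d)) //= eqxx mulr1 big1 ?addr0 // => s.
  by rewrite -val_eqE eq_sym /= => /negbTE ->; rewrite mulr0.
have -> : blk m i = d by apply/eqP; rewrite eqn_leq ge_d blk_le_d.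
rewrite divff ?pnatr_eq0 -?lt0n // subrr big1 // => s _.
by rewrite eq_sym (ltn_eqF (ltn_ord s)) mulr0.
Qed.

Lemma zvec_Splus : Splus_linf z.
Proof. by rewrite zvec_blk; exact: (stepvec_Splus R d_gt0 (i0 := i0)). Qed.

Let pairvec p := @stepvec R k d (fun i => pair_floor p (blk m i)).
Let pairs p : pred 'I_k := [pred i : 'I_k | (odd (blk m i) == p) && (blk m i < d)%N].

Lemma pairvec_Splus p : Splus_linf (pairvec p).
Proof.
apply: (stepvec_Splus R d_gt0 (i0 := i0)) => //= [i|]; last by rewrite blk_i0 pair_floor0.
by have /andP[le _] := pair_floor_bounds p (blk m i); exact: leq_trans le (blk_le_d i).
Qed.

Lemma lpnorm_Fz_sub_Fpair p : lpnorm r (fun i => F z i - F (pairvec p) i) <= eta.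
Proof.
apply: F_cont; [exact: zvec_Splus | exact: pairvec_Splus |].
by rewrite zvec_blk; apply: linfnorm_stepvecB => // i; exact: pair_floor_bounds.
Qed.

Lemma sum_Fpair_pairs p : \sum_(i < k | pairs p i) `|F (pairvec p) i| `^ r <= (a%:R)^-1.
Proof.
have ainv_ge0 : 0 <= (a%:R : R)^-1 by rewrite invr_ge0 ltW.
have total : \sum_(i < k) `|F (pairvec p) i| `^ r = 1.
  by rewrite -lpnorm_powR // (proj1 (F_Splus (pairvec_Splus p))) powR1.
rewrite -[leRHS]mulr1 -[X in _ * X]total /pairs /=.
apply: (sum_sparse_blocks (b := fun i : 'I_k => blk m i) (fun i => powR_ge0 _ _) ainv_ge0
  (E := fun s => (odd s == p) && (s < d)%N) (N := d))
  => [i|s /andP[/eqP odd_s _]|s /andP[_ s_lt]].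
- exact: blk_le_d.
- move=> i j bi bj; congr (`|_| `^ r); apply: F_step (pairvec_Splus p) _ _ _.
  by rewrite /pairvec /stepvec bi bj pair_floorS.
rewrite mulrC ler_pdivlMr // -natrM ler_nat mulnC.
by apply: (card_blk_sparse mk_sorted); rewrite ?size_m.
Qed.

Lemma lpnorm_restr_Fz_pairs p : lpnorm r (restr (pairs p) (F z)) <= eta + rho.
Proof.
set u := F z; set v := F (pairvec p).
apply: le_trans (_ : lpnorm r (fun i => restr (pairs p) (fun i => u i - v i) i +
    restr (pairs p) v i) <= _).
  by apply: lpnorm_le => // i; rewrite /restr; case: (pairs p i); rewrite ?subrK ?addr0.
apply: le_trans (lpnormD r_ge1 _ _) _; apply: lerD.
  exact: le_trans (lpnorm_restr_le r_ge1 _ _) (lpnorm_Fz_sub_Fpair p).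
apply: lpnorm_restr_le_powR; rewrite ?powR_ge0 // /rho powRKV // ?invr_ge0 //.
exact: sum_Fpair_pairs.
Qed.

Lemma lpnorm_restr_Fz_head :
  lpnorm r (restr [pred i : 'I_k | blk m i < d]%N (F z)) <= 2 * (eta + rho).
Proof.
apply: le_trans (lpnorm_restr_cover r_ge1 (Q1 := pairs true) (Q2 := pairs false) _ _) _.
  by move=> i /= lt_d; rewrite /pairs /= lt_d !andbT; case: odd.
by rewrite mulr_natl mulr2n; apply: lerD; exact: lpnorm_restr_Fz_pairs.
Qed.

Let k_pos : 0 < (k%:R : R).
Proof. by rewrite ltr0n (leq_ltn_trans _ (ltn_ord i0)). Qed.

Let kappa_ge0 : 0 <= kappa.
Proof. by rewrite invr_ge0 powR_ge0. Qed.

Let kappa_powR : kappa `^ r = (k%:R)^-1.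
Proof. by rewrite /kappa powR_invr ?powR_ge0 // (powRKV r_neq0 (ltW k_pos)). Qed.

Lemma lpnorm_unif : lpnorm r (fun _ : 'I_k => kappa) = 1.
Proof.
rewrite /lpnorm sumr_const card_ord ger0_norm // kappa_powR.
by rewrite -[_ *+ k]mulr_natr mulVf ?powR1 // gt_eqF.
Qed.

Lemma lpnorm_restr_unif_head :
  lpnorm r (restr [pred i : 'I_k | blk m i < d]%N (fun=> kappa)) <= rho.
Proof.
apply: lpnorm_restr_le_powR; rewrite ?powR_ge0 // /rho powRKV // ?invr_ge0 //.
rewrite sumr_const ger0_norm // kappa_powR -[_ *+ #|_|]mulr_natr mulrC ler_pdivrMr //.
rewrite mulrC ler_pdivlMr // -natrM ler_nat mulnC.
by rewrite -size_m (card_blk_head mk_sorted) ?size_m.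
Qed.

Let tail_lt : (bnd k m d < k)%N.
Proof.
rewrite -[k in (_ < k)%N](nth_default k (s := 0%N :: m) (n := d.+1)) /= ?size_m //.
by apply: (bnd_ltS mk_sorted); rewrite size_m d_gt0 /=.
Qed.

Let tail : 'I_k := Ordinal tail_lt.

Lemma Fz_const_tail (i : 'I_k) : ~~ (blk m i < d)%N -> F z i = F z tail.
Proof.
have blk_d j : ~~ (blk m j < d)%N -> blk m j = d.
  by rewrite -leqNgt => ge_d; apply/eqP; rewrite eqn_leq ge_d blk_le_d.
have blk_tail : blk m tail = d by apply/blk_d; rewrite (ltn_blk mk_sorted) // ltnn.
move=> /blk_d blk_i; apply: F_step zvec_Splus _ _ _.
by rewrite zvec_blk /stepvec blk_i blk_tail.
Qed.

Lemma lpnorm_Fz_sub_unif :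
  lpnorm r (fun i => F z i - kappa) <= 2 * (2 * (eta + rho) + rho).
Proof.
have [Fz1 Fz_ge0] := F_Splus zvec_Splus.
apply: le_trans (lpnorm_sub_le_restr r_ge1 (P := [pred i : 'I_k | blk m i < d]%N)
  Fz1 lpnorm_unif (Fz_ge0 tail) kappa_ge0 Fz_const_tail (fun _ _ => erefl)) _.
apply: ler_wpM2l; first exact: ler0n.
exact: lerD lpnorm_restr_Fz_head lpnorm_restr_unif_head.
Qed.

End ZvecImage.

Lemma lpnorm_le_omegaF (R : realType) (r : R) k (F : ('I_k -> R) -> 'I_k -> R) x y t :
  Splus_linf x -> Splus_linf y -> linfnorm (fun i => x i - y i) <= t ->
  ((lpnorm r (fun i => F x i - F y i))%:E <= omegaF r F t)%E.
Proof. by move=> xS yS xy; apply: ereal_sup_ubound; exists x, y. Qed.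

Lemma sorted_rcons_last (m : seq nat) k : (0 < size m)%N -> sorted ltn m ->
  (nth 0 m (size m).-1 < k)%N -> sorted ltn (rcons m k).
Proof. by case: m => // t m _ /=; rewrite rcons_path nth_last /= => -> ->. Qed.

Lemma absz_ceil_powR_bounds (R : realType) (X r : R) : 2 <= X -> 1 <= r ->
  (1 < `|Num.ceil (X `^ r)|)%N /\ (`|Num.ceil (X `^ r)|%:R : R)^-1 `^ r^-1 <= X^-1.
Proof.
move=> X_ge2 r_ge1; set a := `|_|%N.
have X_pos : 0 < X := lt_le_trans (ltr0Sn _ 1) X_ge2.
have r_ge0 : 0 <= r := le_trans ler01 r_ge1.
have X_le_Xr : X <= X `^ r.
  by rewrite -{1}(powRr1 (ltW X_pos)) (ler_powR (le_trans (ler1n _ 2) X_ge2)).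
have Xr_le_a : X `^ r <= a%:R.
  by rewrite natr_absz ger0_norm ?ceil_ge // ceil_ge0 (lt_le_trans _ (powR_ge0 _ _)) ?ltrN10.
have X_le_a := le_trans X_le_Xr Xr_le_a.
split; first by rewrite -(ltr_nat R) (lt_le_trans _ (le_trans X_ge2 X_le_a)) ?ltr_nat.
rewrite powR_invr ?ler0n // lef_pV2 ?posrE ?powR_gt0 ?(lt_le_trans X_pos X_le_a) //.
rewrite -{1}(powRVK (lt0r_neq0 (lt_le_trans ltr01 r_ge1)) (ltW X_pos)).
by apply: ge0_ler_powR; rewrite ?nnegrE ?powR_ge0 ?invr_ge0.
Qed.

Theorem theorem6p2 (R : realType) (r : R) (d : nat) (eps : R) :
  1 <= r -> (0 < d)%N -> 0 < eps ->
  let a : nat := `|Num.ceil ((32 / eps + 2) `^ r)|%N in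
  forall (m : d.-tuple nat),
    sorted ltn m -> (forall s, s \in m -> Qset a s) ->
  forall (k : nat), Qset a k -> (nth 0%N m d.-1 < k)%N ->
  forall (F : ('I_k -> R) -> ('I_k -> R)),
    (forall x, @Splus_linf R k x -> @Splus_lp R r k (F x)) ->
    step_preserving (@Splus_linf R k) F ->
    (omegaF r F (d%:R^-1) <= (eps / 8)%:E)%E ->
    lpnorm r (fun i => F (@zvec R k d m) i - (k%:R `^ r^-1)^-1) <= eps.
Proof.
move=> r_ge1 d_gt0 eps_gt0 a m m_sorted mQ k kQ m_lt_k F F_Splus F_step F_omega.
have size_m : size m = d := size_tuple m.
have mk_sorted : sorted ltn (rcons m k) by apply: sorted_rcons_last; rewrite ?size_m.
have mkQ : {in rcons m k, forall t, Qset a t}.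
  by move=> t; rewrite mem_rcons inE => /predU1P [->|/mQ].
have X_ge2 : 2 <= 32 / eps + 2 by rewrite lerDr divr_ge0 // ltW.
have [a_gt1 rho_le] := absz_ceil_powR_bounds X_ge2 r_ge1.
have X_inv : (32 / eps + 2)^-1 <= eps / 32.
  by rewrite -[eps / 32]invf_div lef_pV2 ?posrE ?divr_gt0 ?(lt_le_trans _ X_ge2) // lerDl.
have F_cont x y : Splus_linf x -> Splus_linf y -> linfnorm (fun i => x i - y i) <= d%:R^-1 ->
    lpnorm r (fun i => F x i - F y i) <= eps / 8.
  by move=> xS yS xy; rewrite -lee_fin; apply: le_trans F_omega; exact: lpnorm_le_omegaF.
apply: le_trans (lpnorm_Fz_sub_unif r_ge1 d_gt0 size_m mk_sorted a_gt1 mkQ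
  F_Splus F_step F_cont) _.
rewrite -/a in rho_le; move: rho_le X_inv.
move: ((a%:R : R)^-1 `^ r^-1) ((32 / eps + 2)^-1) => rho Xinv; clear -eps_gt0.
lra.
Qed.
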